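(* Let $\nu$ be a Krull valuation on $\mathbb{K}[x]$, $\mu$ a valuation on $\overline{\mathbb{K}}[x]$ extending $\nu$, $Q$ a key polynomial for $\nu$ of degree $n$, and $a$ an optimizing root of $Q$. Assume $\nu(Q)\in\mu\overline{\mathbb{K}}$ and let $e$ be the least positive integer with $e\nu(Q)\in\mu\mathbb{K}(a)$. Then for every $g\in\mathbb{K}[x]$ with $\deg g<ne$ we have $\mu_{x-a}(g)=\mu(g)=\nu_Q(g)$.
   Context: $\overline{\mathbb{K}}$ is an algebraic closure of $\mathbb{K}$; $\mu\overline{\mathbb{K}}$ and $\mu\mathbb{K}(a)$ are the value groups of $\mu$ restricted to $\overline{\mathbb{K}}$ and to $\mathbb{K}(a)$. Truncations: $\nu_Q(f)=\min_i\nu(f_iQ^i)$ where $f=\sum f_iQ^i$ is the $Q$-expansion ($\deg f_i<\deg Q$), and $\mu_{x-a}(\sum_i c_i(x-a)^i)=\min_i\{\mu(c_i)+i\mu(x-a)\}$. Optimizing root: a root $c$ of $Q$ maximizing $\mu(x-c)$ among roots of $Q$. Key polynomials: for nonzero $f\in\mathbb{K}[x]$, with Hasse derivatives $\partial_bf=\sum_{i\ge b}\binom{i}{b}a_ix^{i-b}$ for $f=\sum a_ix^i$, $\epsilon(f)=\max_{1\le b\le\deg f}(\nu(f)-\nu(\partial_bf))/b$ if $\deg f>0$ and $\epsilon(f)=-\infty$ if $f$ is constant; a monic $Q$ is a key polynomial for $\nu$ if $\epsilon(f)\ge\epsilon(Q)$ implies $\deg f\ge\deg Q$ for all $f$. 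*)

From HB Require Import structures.
From mathcomp Require Import all_boot all_order ssralg poly polydiv.
Set Implicit Arguments. Unset Strict Implicit. Unset Printing Implicit Defensive.
Import Order.TTheory GRing.Theory.
Local Open Scope ring_scope.

Fact vg_display : Order.disp_t. Proof. exact: Order.Disp tt tt. Qed.

HB.mixin Record isOrderedZmod (G : Type)
    of Order.Total vg_display G & GRing.Zmodule G := {
  oz_leD2r : forall x y z : G, (x <= y)%O -> (x + z <= y + z)%O
}.
#[short(type="orderedZmodType")]
HB.structure Definition OrderedZmod :=
  { G of isOrderedZmod G & Order.Total vg_display G & GRing.Zmodule G }.

Section Values.
Context {G : orderedZmodType}.

(* G_oo := G u {oo}, encoded as option G with None = oo *)
Definition vle (x y : option G) : bool :=
  match x, y with
  | _, None => true
  | None, Some _ => false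
  | Some a, Some b => (a <= b)%O
  end.
Definition vadd (x y : option G) : option G :=
  match x, y with Some a, Some b => Some (a + b) | _, _ => None end.
Definition vmin (x y : option G) : option G := if vle x y then x else y.
Definition vmuln (n : nat) (x : option G) : option G :=
  match x with Some a => Some (a *+ n) | None => None end.

Definition is_valuation (R : nzRingType) (v : R -> option G) : Prop :=
  [/\ forall x, v x = None <-> x = 0,
      v 1 = Some 0,
      forall x y, v (x * y) = vadd (v x) (v y)
    & forall x y, vle (vmin (v x) (v y)) (v (x + y))].

(* Elements of the divisible hull Q (x) G together with -oo:
   None = -oo, Some (g, b) stands for g / b (b > 0 in all uses). *)
Definition fle (x y : option (G * nat)) : bool :=
  match x, y with
  | None, _ => true
  | Some _, None => false
  | Some (g, m), Some (h, n) => (g *+ n <= h *+ m)%O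
  end.
Definition fmax (x y : option (G * nat)) := if fle x y then y else x.

Section Poly.
Variable K : fieldType.
Variable nu : {poly K} -> option G.

Definition eps_term (f : {poly K}) (b : nat) : option (G * nat) :=
  match nu f, nu (nderivn b f) with
  | Some x, Some y => Some (x - y, b)
  | _, _ => None
  end.

Definition eps (f : {poly K}) : option (G * nat) :=
  if (size f <= 1)%N then None
  else \big[fmax/None]_(1 <= b < size f) eps_term f b.

Definition key_poly (Q : {poly K}) : Prop :=
  Q \is monic /\
  forall f : {poly K}, fle (eps Q) (eps f) -> ((size Q).-1 <= (size f).-1)%N.

(* i-th coefficient of the Q-expansion f = sum_i f_i Q^i, deg f_i < deg Q *)
Definition qexp (Q f : {poly K}) (i : nat) : {poly K} := (f %/ Q ^+ i) %% Q.

Definition trunc (Q f : {poly K}) : option G :=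
  \big[vmin/None]_(i < size f) nu (qexp Q f i * Q ^+ i).
End Poly.

Section Closure.
Variables (K : fieldType) (L : closedFieldType) (iota : {rmorphism K -> L}).
Variable mu : {poly L} -> option G.

(* mu_{x-a}(g) = min_i { mu(c_i) + i mu(x - a) }, g = sum_i c_i (x-a)^i *)
Definition trunc_lin (a : L) (g : {poly L}) : option G :=
  \big[vmin/None]_(i < size g)
     vadd (mu ((nderivn i g).[a])%:P) (vmuln i (mu ('X - a%:P))).

Definition optimizing_root (Q : {poly K}) (a : L) : Prop :=
  root (map_poly iota Q) a /\
  forall c : L, root (map_poly iota Q) c -> vle (mu ('X - c%:P)) (mu ('X - a%:P)).

Definition in_vg_Kbar (gamma : option G) : Prop :=
  exists c : L, c != 0 /\ mu c%:P = gamma.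

Definition in_vg_Ka (a : L) (gamma : option G) : Prop :=
  exists p q : {poly K},
    [/\ (map_poly iota q).[a] != 0, (map_poly iota p).[a] != 0 &
        mu (((map_poly iota p).[a] / (map_poly iota q).[a])%:P) = gamma].
End Closure.
End Values.

(* Writing delta = mu(x - a), the argument runs as follows.
   1. The truncation mu_{x-a} (computed from the Taylor expansion at a) is
      bounded by mu, and is super-additive and super-multiplicative.
   2. Since a is optimizing, mu_{x-a}(x - c) = mu(x - c) for every root c of
      Q, hence mu(Q) <= mu_{x-a}(Q); comparing Taylor coefficients gives
      nu(Q) <= nu(d_b Q) + b delta for all b, i.e. epsilon(Q) <= delta.
   3. As Q is a key polynomial, every nonzero h with deg h < deg Q satisfies
      epsilon(h) < epsilon(Q) <= delta, i.e. nu(d_j h) + j delta > nu(h) for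
      j >= 1; by Taylor expansion mu(h(a)) = nu(h) <= mu_{x-a}(h).
   4. For deg g < n e the Q-expansion g = sum_{i<e} g_i Q^i has terms of
      values mu(g_i(a)) + i nu(Q), pairwise distinct by minimality of e, so
      mu(g) is their minimum, which is nu_Q(g); by 1-3 it is also a lower
      bound of mu_{x-a}(g) <= mu(g). *)

From HB Require Import structures.
From mathcomp Require Import all_boot all_order ssralg poly polydiv ring.
Set Implicit Arguments. Unset Strict Implicit. Unset Printing Implicit Defensive.
Import Order.TTheory GRing.Theory.
Local Open Scope ring_scope.

Section OrderedGroup.
Variable G : orderedZmodType.
Implicit Types x y z w : G.

Lemma oz_leD2 x y z : ((x + z <= y + z) = (x <= y))%O.
Proof.
apply/idP/idP; last exact: oz_leD2r.
by move/(oz_leD2r _ _ (- z)); rewrite !addrK.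
Qed.

Lemma oz_leD x y z w : (x <= y)%O -> (z <= w)%O -> (x + z <= y + w)%O.
Proof.
move=> le_xy le_zw; apply: (le_trans (oz_leD2r _ _ z le_xy)).
by rewrite ![y + _]addrC oz_leD2.
Qed.

Lemma oz_ltD2 x y z : ((x + z < y + z) = (x < y))%O.
Proof. by rewrite !lt_def oz_leD2 (inj_eq (addIr z)). Qed.

Lemma oz_leMn x y k : (x <= y)%O -> (x *+ k <= y *+ k)%O.
Proof.
move=> le_xy; elim: k => [|k IH]; first by rewrite !mulr0n.
by rewrite !mulrS oz_leD.
Qed.

Lemma oz_ltMn x y k : (0 < k)%N -> (x < y)%O -> (x *+ k < y *+ k)%O.
Proof.
case: k => // k _ lt_xy; elim: k => [|k IH]; first by rewrite !mulr1n.
rewrite (mulrS x) (mulrS y).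
apply: (lt_le_trans (_ : x + x *+ k.+1 < y + x *+ k.+1)%O).
  by rewrite oz_ltD2.
by rewrite ![y + _]addrC oz_leD2 ltW.
Qed.

Lemma oz_leMn2 x y k : (0 < k)%N -> ((x *+ k <= y *+ k) = (x <= y))%O.
Proof.
move=> k_gt0; apply/idP/idP; last exact: oz_leMn.
by apply: contraTT; rewrite -!ltNge; exact: oz_ltMn.
Qed.

Lemma oz_double_eq0 x : x + x = 0 -> x = 0.
Proof.
move=> xx0; case: (ltgtP x 0) => // hx.
  have : (x + x < 0 + x)%O by rewrite oz_ltD2.
  by rewrite xx0 add0r => /lt_trans/(_ hx); rewrite ltxx.
have : (0 + x < x + x)%O by rewrite oz_ltD2.
by rewrite xx0 add0r => /(lt_trans hx); rewrite ltxx.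
Qed.
End OrderedGroup.

Section ExtendedValues.
Variable G : orderedZmodType.
Implicit Types a b c d : option G.

Lemma vle_refl a : vle a a.
Proof. by case: a => //= ?; rewrite lexx. Qed.

Lemma vle_trans b a c : vle a b -> vle b c -> vle a c.
Proof. by case: a; case: b; case: c => //= ? ? ?; apply: le_trans. Qed.

Lemma vle_total a b : vle a b || vle b a.
Proof. by case: a; case: b => //= ? ?; apply: le_total. Qed.

Lemma vle_anti a b : vle a b -> vle b a -> a = b.
Proof.
case: a; case: b => //= ? ? h1 h2; congr Some; apply/eqP.
by rewrite eq_le h1 h2.
Qed.

Lemma vleNgt a b : ~~ vle a b -> vle b a.
Proof. by move=> h; move: (vle_total a b); rewrite (negbTE h). Qed.

Lemma vle_None a : vle a None. Proof. by case: a. Qed.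

Lemma vle_min c a b : vle c (vmin a b) = vle c a && vle c b.
Proof.
rewrite /vmin; case: ifP => le_ab.
  by apply/idP/andP => [h|[]//]; split => //; apply: vle_trans le_ab.
apply/idP/andP => [h|[]//]; split => //; apply: vle_trans h _.
exact: vleNgt (negbT le_ab).
Qed.

Lemma vmin_l a b : vle (vmin a b) a.
Proof. by move: (vle_refl (vmin a b)); rewrite vle_min => /andP[]. Qed.

Lemma vmin_r a b : vle (vmin a b) b.
Proof. by move: (vle_refl (vmin a b)); rewrite vle_min => /andP[]. Qed.

Lemma vminNr a : vmin a None = a.
Proof. by rewrite /vmin vle_None. Qed.

Lemma vminNl a : vmin None a = a.
Proof. by rewrite /vmin; case: a. Qed.

Lemma vmin_eq a b : vmin a b = a \/ vmin a b = b.
Proof. by rewrite /vmin; case: ifP; [left|right]. Qed.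

Lemma vle_lbound_eq a b : (forall c, vle c a = vle c b) -> a = b.
Proof.
move=> lb; apply: vle_anti; first by rewrite -lb vle_refl.
by rewrite lb vle_refl.
Qed.

Lemma vminA : associative (@vmin G).
Proof. by move=> a b c; apply: vle_lbound_eq => d; rewrite !vle_min andbA. Qed.

Lemma vminC : commutative (@vmin G).
Proof. by move=> a b; apply: vle_lbound_eq => d; rewrite !vle_min andbC. Qed.

Lemma vaddC a b : vadd a b = vadd b a.
Proof. by case: a; case: b => //= ? ?; rewrite addrC. Qed.

Lemma vaddA a b c : vadd a (vadd b c) = vadd (vadd a b) c.
Proof. by case: a; case: b; case: c => //= ? ? ?; rewrite addrA. Qed.

Lemma vadd0 a : vadd a (Some 0) = a.
Proof. by case: a => //= ?; rewrite addr0. Qed.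

Lemma vle_add a b c d : vle a b -> vle c d -> vle (vadd a c) (vadd b d).
Proof. by case: a; case: b; case: c; case: d => //= ? ? ? ?; apply: oz_leD. Qed.

Lemma vmulnS k a : vmuln k.+1 a = vadd (vmuln k a) a.
Proof. by case: a => //= ?; rewrite mulrSr. Qed.

Lemma vmulnD k l a : vmuln (k + l) a = vadd (vmuln k a) (vmuln l a).
Proof. by case: a => //= ?; rewrite mulrnDr. Qed.
End ExtendedValues.

HB.instance Definition _ (G : orderedZmodType) :=
  Monoid.isComLaw.Build (option G) None (@vmin G) (@vminA G) (@vminC G)
    (@vminNl G).

Section BigMin.
Variable G : orderedZmodType.
Implicit Types c : option G.

Definition bmin N (F : nat -> option G) := \big[vmin/None]_(i < N) F i.

Lemma bmin_recr N F : bmin N.+1 F = vmin (bmin N F) (F N).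
Proof. by rewrite /bmin big_ord_recr. Qed.

Lemma bmin0 F : bmin 0 F = None.
Proof. by rewrite /bmin big_ord0. Qed.

Lemma bmin_ge c N F : (forall i, (i < N)%N -> vle c (F i)) -> vle c (bmin N F).
Proof.
elim: N => [|N IH] lb; first by rewrite bmin0 vle_None.
by rewrite bmin_recr vle_min IH ?lb // => i /ltnW; apply: lb.
Qed.

Lemma bmin_le N F i : (i < N)%N -> vle (bmin N F) (F i).
Proof.
elim: N => [|N IH] //; rewrite ltnS leq_eqVlt => /orP[/eqP->|lt_iN].
  by rewrite bmin_recr vmin_r.
by rewrite bmin_recr; apply: vle_trans (vmin_l _ _) (IH lt_iN).
Qed.

Lemma bmin_attained N F :
  bmin N F = None \/ exists2 i, (i < N)%N & bmin N F = F i.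
Proof.
elim: N => [|N IH]; first by rewrite bmin0; left.
rewrite bmin_recr; case: (vmin_eq (bmin N F) (F N)) => ->.
  by case: IH => [->|[i lt_iN ->]]; [left|right; exists i => //; exact: ltnW].
by right; exists N.
Qed.

Lemma bmin_widen N M F : (N <= M)%N ->
  (forall i, (N <= i < M)%N -> F i = None) -> bmin N F = bmin M F.
Proof.
move=> le_NM; elim: M le_NM => [|M IH]; first by rewrite leqn0 => /eqP->.
rewrite leq_eqVlt => /orP[/eqP-> // | ]; rewrite ltnS => le_NM oo_tail.
rewrite bmin_recr oo_tail ?le_NM ?ltnSn // vminNr -IH // => i /andP[h1 h2].
by apply: oo_tail; rewrite h1 ltnS ltnW.
Qed.

Lemma eq_bmin N F F' : (forall i, (i < N)%N -> F i = F' i) ->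
  bmin N F = bmin N F'.
Proof. by move=> eqF; apply: eq_bigr => i _; apply: eqF. Qed.
End BigMin.

Section DivisibleHull.
Variable G : orderedZmodType.
Implicit Types (x y z : option (G * nat)) (r : seq nat)
  (F : nat -> option (G * nat)).

Definition fpos x := if x is Some (_, m) then (0 < m)%N else true.

Lemma fle_total x y : fle x y || fle y x.
Proof. by case: x => [[g m]|]; case: y => [[h n]|] //=; apply: le_total. Qed.

Lemma fle_trans y x z : fpos y -> fle x y -> fle y z -> fle x z.
Proof.
case: x => [[g m]|] //; case: y => [[h n]|] //; case: z => [[k p]|] //= n0 h1 h2.
have swap (u : G) (i j : nat) : (u *+ i) *+ j = (u *+ j) *+ i.
  by rewrite -!mulrnA mulnC.
rewrite -(oz_leMn2 _ _ n0) swap.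
apply: le_trans (oz_leMn p h1) _; rewrite swap [X in (_ <= X)%O]swap.
exact: oz_leMn.
Qed.

Lemma fbig_le r F z : (forall b, b \in r -> fle (F b) z) ->
  fle (\big[fmax/None]_(b <- r) F b) z.
Proof.
elim: r => [|x r IH] ub; first by rewrite big_nil.
rewrite big_cons /fmax; case: ifP => _.
  by apply: IH => b hb; apply: ub; rewrite inE hb orbT.
by apply: ub; rewrite inE eqxx.
Qed.

Lemma fbig_pos r F : (forall b, b \in r -> fpos (F b)) ->
  fpos (\big[fmax/None]_(b <- r) F b).
Proof.
elim: r => [|x r IH] pos; first by rewrite big_nil.
rewrite big_cons /fmax; case: ifP => _.
  by apply: IH => b hb; apply: pos; rewrite inE hb orbT.
by apply: pos; rewrite inE eqxx.
Qed.

Lemma fbig_ge r F z j : (forall b, b \in r -> fpos (F b)) -> j \in r ->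
  fle z (F j) -> fle z (\big[fmax/None]_(b <- r) F b).
Proof.
elim: r => [|x r IH] //= pos jr le_zj.
have pos_r : forall b, b \in r -> fpos (F b).
  by move=> b hb; apply: pos; rewrite inE hb orbT.
have pos_x : fpos (F x) by apply: pos; rewrite inE eqxx.
rewrite big_cons /fmax; case: (eqVneq j x) jr le_zj => [-> _ le_zj | njx jr le_zj].
  by case: ifP => // le_x_max; apply: fle_trans pos_x le_zj le_x_max.
rewrite inE (negbTE njx) /= in jr.
case: ifP => le_x_max; first exact: IH.
have le_max_x : fle (\big[fmax/None]_(b <- r) F b) (F x).
  by move: (fle_total (F x) (\big[fmax/None]_(b <- r) F b)); rewrite le_x_max.
exact: fle_trans (fbig_pos pos_r) (IH pos_r jr le_zj) le_max_x.
Qed.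
End DivisibleHull.

Section Valuation.
Variables (G : orderedZmodType) (R : comNzRingType) (v : R -> option G).
Hypothesis hv : is_valuation v.

Lemma v0 : v 0 = None. Proof. by case: hv => h _ _ _; apply/h. Qed.
Lemma vNone x : (v x = None) <-> x = 0. Proof. by case: hv. Qed.
Lemma v1 : v 1 = Some 0. Proof. by case: hv. Qed.
Lemma vM x y : v (x * y) = vadd (v x) (v y). Proof. by case: hv. Qed.
Lemma vD x y : vle (vmin (v x) (v y)) (v (x + y)). Proof. by case: hv. Qed.

Lemma vSome x : x != 0 -> exists g, v x = Some g.
Proof.
by case E: (v x) => [g|]; [exists g | move/vNone: E => ->; rewrite eqxx].
Qed.

Lemma vX x k : x != 0 -> v (x ^+ k) = vmuln k (v x).
Proof.
move=> nz; elim: k => [|k IH].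
  by rewrite expr0 v1; case: (vSome nz) => g ->.
by rewrite exprSr vM IH vmulnS.
Qed.

Lemma vN1 : v (-1) = Some 0.
Proof.
have : v (-1 * -1) = Some 0 by rewrite mulrNN mulr1 v1.
by rewrite vM; case: (v (-1)) => [g|] //= [] /oz_double_eq0 ->.
Qed.

Lemma vN x : v (- x) = v x.
Proof. by rewrite -mulN1r vM vN1 vaddC vadd0. Qed.

Lemma vD_ge c x y : vle c (v x) -> vle c (v y) -> vle c (v (x + y)).
Proof. by move=> h1 h2; apply: vle_trans (vD x y); rewrite vle_min h1. Qed.

Lemma vsum_ge c (I : Type) (r : seq I) (P : pred I) (F : I -> R) :
  (forall i, P i -> vle c (v (F i))) -> vle c (v (\sum_(i <- r | P i) F i)).
Proof.
move=> lb; apply: (big_ind (fun s => vle c (v s))) => //; last exact: vD_ge.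
by rewrite v0 vle_None.
Qed.

Lemma vMn x k : vle (v x) (v (x *+ k)).
Proof.
elim: k => [|k IH]; first by rewrite mulr0n v0 vle_None.
by rewrite mulrS; apply: vD_ge => //; rewrite vle_refl.
Qed.

Lemma vD_lt x y : ~~ vle (v y) (v x) -> v (x + y) = v x.
Proof.
move=> lt_xy; apply: vle_anti.
  have := vD (x + y) (- y); rewrite addrK vN.
  case/orP: (vle_total (v (x + y)) (v y)) => le1; first by rewrite /vmin le1.
  by rewrite /vmin; case: ifP => // _ le2; rewrite le2 in lt_xy.
by apply: vle_trans (vD x y); rewrite /vmin (vleNgt lt_xy) vle_refl.
Qed.

Lemma vD_min x y : (v x = v y -> v x = None) -> v (x + y) = vmin (v x) (v y).
Proof.
move=> distinct; have [exy|nexy] := eqVneq (v x) (v y).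
  move/vNone: (distinct exy) => x0; move: exy; rewrite x0 v0 => /esym/vNone->.
  by rewrite addr0 v0 vminNr.
have strict b c : v b != v c -> vle (v b) (v c) -> ~~ vle (v c) (v b).
  by move=> ne le; apply: contra ne => le'; apply/eqP/vle_anti.
case/orP: (vle_total (v x) (v y)) => le_xy.
  by rewrite /vmin le_xy vD_lt // strict.
have lt_yx : ~~ vle (v x) (v y) by rewrite strict // eq_sym.
by rewrite /vmin (negbTE lt_yx) addrC vD_lt.
Qed.

Lemma vsum_lt x0 (I : Type) (r : seq I) (P : pred I) (F : I -> R) :
  x0 != 0 -> (forall i, P i -> ~~ vle (v (F i)) (v x0)) ->
  v (x0 + \sum_(i <- r | P i) F i) = v x0.
Proof.
move=> nz gt; apply: vD_lt.
apply: (big_ind (fun s => ~~ vle (v s) (v x0))) => //.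
  by rewrite v0; case: (vSome nz) => g ->.
move=> s t hs ht; apply: contraL (vD s t) => le_st.
rewrite /vmin; case: ifP => _; apply/negP => le_x0.
  by move/negP: hs; apply; apply: vle_trans le_x0 le_st.
by move/negP: ht; apply; apply: vle_trans le_x0 le_st.
Qed.

Lemma vsum_distinct (t : nat -> R) N :
  (forall i j, (i < j < N)%N -> v (t i) = v (t j) -> v (t i) = None) ->
  v (\sum_(i < N) t i) = bmin N (fun i => v (t i)).
Proof.
elim: N => [|N IH] distinct; first by rewrite big_ord0 bmin0 v0.
have distinctN : forall i j, (i < j < N)%N -> v (t i) = v (t j) -> v (t i) = None.
  by move=> i j /andP[h1 h2]; apply: distinct; rewrite h1 ltnW.
rewrite big_ord_recr bmin_recr /= -IH //; apply: vD_min; rewrite IH //.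
case: (bmin_attained N (fun i => v (t i))) => [-> // | [i lt_iN ->] eqv].
by apply: distinct eqv; rewrite lt_iN ltnSn.
Qed.
End Valuation.

Section TruncationAtA.
Variables (G : orderedZmodType) (L : closedFieldType) (mu : {poly L} -> option G).
Hypothesis mu_val : is_valuation mu.
Variable a : L.
Implicit Types F H : {poly L}.

Definition delta := mu ('X - a%:P).

Definition tl_term F i := vadd (mu (F^`N(i).[a])%:P) (vmuln i delta).

Lemma trunc_linE F : trunc_lin mu a F = bmin (size F) (tl_term F).
Proof. by []. Qed.

Lemma delta_neq_None : delta <> None.
Proof. by move/(vNone mu_val)/eqP; rewrite polyXsubC_eq0. Qed.

Lemma tl_term_oversize F i : (size F <= i)%N -> tl_term F i = None.
Proof. by move=> h; rewrite /tl_term nderivn_poly0 // horner0 (v0 mu_val). Qed.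

Lemma trunc_lin_le_term F i : vle (trunc_lin mu a F) (tl_term F i).
Proof.
case: (ltnP i (size F)) => h; first by rewrite trunc_linE; exact: bmin_le.
by rewrite tl_term_oversize // vle_None.
Qed.

Lemma trunc_lin_ge c F : (forall i, vle c (tl_term F i)) ->
  vle c (trunc_lin mu a F).
Proof. by move=> lb; rewrite trunc_linE; apply: bmin_ge. Qed.

Lemma taylor_at F (x : {poly L}) :
  F^:P.[x] = \sum_(i < size F) (F^`N(i).[a])%:P * (x - a%:P) ^+ i.
Proof.
rewrite -{1}(subrK a%:P x) addrC nderiv_taylor; last exact: mulrC.
rewrite size_map_polyC; apply: eq_bigr => i _.
by rewrite nderivn_map horner_map.
Qed.

Lemma horner_polyC_X F : F^:P.['X] = F.
Proof. by rewrite -[RHS]comp_polyXr. Qed.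

Lemma coef_shift F i : (F \Po ('X + a%:P))`_i = F^`N(i).[a].
Proof.
rewrite /comp_poly taylor_at addrK.
have -> : \sum_(i < size F) (F^`N(i).[a])%:P * 'X ^+ i =
    \poly_(i < size F) F^`N(i).[a].
  by rewrite poly_def; apply: eq_bigr => j _; rewrite mul_polyC.
rewrite coef_poly; case: ltnP => // h.
by rewrite nderivn_poly0 // horner0.
Qed.

Lemma tl_term_shift F j :
  tl_term F j = vadd (mu ((F \Po ('X + a%:P))`_j)%:P) (vmuln j delta).
Proof. by rewrite coef_shift. Qed.

Lemma vle_addD (c A B C D : option G) : vle c (vadd A D) -> vle c (vadd B D) ->
  vle (vmin A B) C -> vle c (vadd C D).
Proof.
move=> h1 h2 h3; apply: vle_trans (vle_add h3 (vle_refl D)).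
by case: (vmin_eq A B) => ->.
Qed.

Lemma vsum_addD (c D : option G) (I : Type) (r : seq I) (P : pred I)
  (x : I -> L) : (forall i, P i -> vle c (vadd (mu (x i)%:P) D)) ->
  vle c (vadd (mu (\sum_(i <- r | P i) x i)%:P) D).
Proof.
move=> lb; apply: (big_ind (fun s => vle c (vadd (mu s%:P) D))) => //.
  by rewrite (v0 mu_val) vle_None.
by move=> s t hs ht; apply: vle_addD hs ht _; rewrite polyCD; exact: (vD mu_val).
Qed.

Lemma trunc_lin_le_mu F : vle (trunc_lin mu a F) (mu F).
Proof.
rewrite -{2}[F]horner_polyC_X taylor_at.
apply: (vsum_ge mu_val) => i _.
rewrite (vM mu_val) (vX mu_val) ?polyXsubC_eq0 //; exact: trunc_lin_le_term.
Qed.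

Lemma trunc_lin0 : trunc_lin mu a 0 = None.
Proof. by rewrite trunc_linE size_poly0 bmin0. Qed.

Lemma trunc_lin1 : trunc_lin mu a 1 = Some 0.
Proof.
rewrite trunc_linE size_poly1 bmin_recr bmin0 vminNl /tl_term nderivn0 hornerC.
by rewrite (v1 mu_val); case: delta delta_neq_None => //= d _; rewrite mulr0n addr0.
Qed.

Lemma trunc_lin_add_ge c F H : vle c (trunc_lin mu a F) ->
  vle c (trunc_lin mu a H) -> vle c (trunc_lin mu a (F + H)).
Proof.
move=> hF hH; apply: trunc_lin_ge => i; rewrite /tl_term nderivnD hornerD.
apply: (vle_addD (A := mu (F^`N(i).[a])%:P) (B := mu (H^`N(i).[a])%:P)).
- exact: vle_trans hF (trunc_lin_le_term F i).
- exact: vle_trans hH (trunc_lin_le_term H i).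
by rewrite polyCD; exact: (vD mu_val).
Qed.

Lemma trunc_lin_sum_ge c (I : Type) (r : seq I) (P : pred I)
  (F : I -> {poly L}) : (forall i, P i -> vle c (trunc_lin mu a (F i))) ->
  vle c (trunc_lin mu a (\sum_(i <- r | P i) F i)).
Proof.
move=> lb; apply: (big_ind (fun s => vle c (trunc_lin mu a s))) => //.
  by rewrite trunc_lin0 vle_None.
exact: trunc_lin_add_ge.
Qed.

Lemma vadd_split (A B D : option G) i j : (j <= i)%N ->
  vadd (vadd A B) (vmuln i D) =
  vadd (vadd A (vmuln j D)) (vadd B (vmuln (i - j) D)).
Proof.
move=> le_ji; rewrite -{1}(subnKC le_ji) vmulnD.
by rewrite -!vaddA; congr vadd; rewrite !vaddA; congr vadd; exact: vaddC.
Qed.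

Lemma trunc_lin_mul_ge F H :
  vle (vadd (trunc_lin mu a F) (trunc_lin mu a H)) (trunc_lin mu a (F * H)).
Proof.
apply: trunc_lin_ge => i; rewrite tl_term_shift comp_polyM coefM.
apply: vsum_addD => j _; have le_ji : (j <= i)%N by rewrite -ltnS ltn_ord.
rewrite polyCM (vM mu_val) (vadd_split _ _ _ le_ji) -!tl_term_shift.
by apply: vle_add; apply: trunc_lin_le_term.
Qed.

Lemma mu_le_trunc_linM F H : vle (mu F) (trunc_lin mu a F) ->
  vle (mu H) (trunc_lin mu a H) -> vle (mu (F * H)) (trunc_lin mu a (F * H)).
Proof.
move=> hF hH; rewrite (vM mu_val); apply: vle_trans (trunc_lin_mul_ge F H).
exact: vle_add.
Qed.

Lemma mu_le_trunc_linX F k : vle (mu F) (trunc_lin mu a F) ->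
  vle (mu (F ^+ k)) (trunc_lin mu a (F ^+ k)).
Proof.
move=> hF; elim: k => [|k IH]; last by rewrite exprS; apply: mu_le_trunc_linM.
by rewrite expr0 trunc_lin1 (v1 mu_val) vle_refl.
Qed.

Lemma trunc_lin_XsubC c :
  trunc_lin mu a ('X - c%:P) = vmin (mu (a - c)%:P) delta.
Proof.
rewrite trunc_linE size_XsubC bmin_recr bmin_recr bmin0 vminNl /tl_term.
rewrite nderivn0 nderivn1 derivXsubC !hornerE /= (v1 mu_val).
by case: delta delta_neq_None => //= d _; rewrite mulr0n vadd0 mulr1n add0r.
Qed.
End TruncationAtA.

(* Both sides equal the multinomial coefficient (b + k + i)! / (b! k! i!). *)
Lemma bin_trinomial b k i :
  ('C(b + (k + i), b) * 'C(k + i, k) = 'C(k + b + i, k + b) * 'C(k + b, b))%N.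
Proof.
apply/eqP; rewrite -(eqn_pmul2r (fact_gt0 i)) -(eqn_pmul2r (fact_gt0 k)).
rewrite -(eqn_pmul2r (fact_gt0 b)); apply/eqP.
have split_b_ki := bin_fact (leq_addr (k + i) b).
have split_k_i := bin_fact (leq_addr i k).
have split_kb_i := bin_fact (leq_addr i (k + b)).
have split_b_k := bin_fact (leq_addl k b).
rewrite !addKn addnK in split_b_ki split_k_i split_kb_i split_b_k.
transitivity (b + (k + i))`!; first by rewrite -split_b_ki -split_k_i; ring.
by rewrite addnCA addnA -split_kb_i -split_b_k; ring.
Qed.

Lemma nderivn_comp (R : nzRingType) (p : {poly R}) b k :
  (p^`N(b))^`N(k) = p^`N(k + b) *+ 'C(k + b, b).
Proof.
apply/polyP => i; rewrite coefMn !coef_nderivn -!mulrnA.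
by rewrite [(b + (k + i))%N]addnA [(b + k)%N]addnC -bin_trinomial addnA (addnC b k).
Qed.

Lemma size_nderivn_le (R : nzRingType) (p : {poly R}) k :
  (size p^`N(k) <= size p)%N.
Proof. by rewrite /nderivn; apply: leq_trans (size_poly _ _) (leq_subr _ _). Qed.

Section QExpansion.
Variables (K : fieldType) (Q : {poly K}).
Hypothesis Q_nonconst : (1 < size Q)%N.

Let Q_neq0 : Q != 0.
Proof. by rewrite -size_poly_gt0 ltnW. Qed.

Definition qterm (g : {poly K}) i := qexp Q g i * Q ^+ i.

Lemma qexp_expansion (g : {poly K}) N :
  g = \sum_(i < N) qterm g i + (g %/ Q ^+ N) * Q ^+ N.
Proof.
elim: N => [|N IH]; first by rewrite big_ord0 add0r expr0 divp1 mulr1.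
rewrite {1}IH big_ord_recr /= -addrA; congr (_ + _).
rewrite {1}(divp_eq (g %/ Q ^+ N) Q) divp_divl -exprSr /qterm /qexp.
by rewrite mulrDl addrC exprSr mulrA [_ * Q * _]mulrAC -mulrA.
Qed.

Lemma size_Qexp i : size (Q ^+ i) = ((size Q).-1 * i).+1.
Proof. by rewrite -(size_exp Q i) prednK // lt0n size_poly_eq0 expf_neq0. Qed.

Lemma size_qexp_lt (g : {poly K}) i : (size (qexp Q g i) < size Q)%N.
Proof. by rewrite ltn_modp. Qed.

Lemma qexp_oversize (g : {poly K}) i :
  (size g <= (size Q).-1 * i)%N -> qexp Q g i = 0.
Proof. by move=> h; rewrite /qexp divp_small ?mod0p // size_Qexp ltnS. Qed.

Lemma qexp_sum_small (g : {poly K}) N : (size g <= (size Q).-1 * N)%N ->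
  g = \sum_(i < N) qterm g i.
Proof.
move=> small; rewrite {1}(qexp_expansion g N) divp_small ?mul0r ?addr0 //.
by rewrite size_Qexp ltnS.
Qed.
Lemma trunc_expansion (G : orderedZmodType) (nu : {poly K} -> option G)
  (nu_val : is_valuation nu) (g : {poly K}) N : (size g <= (size Q).-1 * N)%N ->
  trunc nu Q g = bmin N (fun i => nu (qterm g i)).
Proof.
move=> size_g.
have oo_term i : (N <= i)%N || (size g <= i)%N -> nu (qterm g i) = None.
  move=> large; rewrite /qterm qexp_oversize ?mul0r ?(v0 nu_val) //.
  have deg_Q : (0 < (size Q).-1)%N by rewrite -subn1 subn_gt0.
  case/orP: large => large; last exact: leq_trans large (leq_pmull _ deg_Q).
  by apply: leq_trans size_g _; rewrite leq_mul2l large orbT.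
have -> : trunc nu Q g = bmin (size g) (fun i => nu (qterm g i)) by [].
rewrite (@bmin_widen _ N (maxn N (size g))) ?leq_maxl //; last first.
  by move=> i /andP[large _]; apply: oo_term; rewrite large.
rewrite (@bmin_widen _ (size g) (maxn N (size g))) ?leq_maxr //.
by move=> i /andP[large _]; apply: oo_term; rewrite large orbT.
Qed.
End QExpansion.


Section KeyPolynomial.
Variables (G : orderedZmodType) (K : fieldType) (L : closedFieldType)
  (iota : {rmorphism K -> L}) (nu : {poly K} -> option G)
  (mu : {poly L} -> option G).
Hypotheses (nu_val : is_valuation nu) (mu_val : is_valuation mu)
  (mu_ext : forall f : {poly K}, mu (map_poly iota f) = nu f).
Variables (Q : {poly K}) (a : L).
Hypotheses (hQ : key_poly nu Q) (ha : optimizing_root iota mu Q a).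

Local Notation delta := (delta mu a).
Local Notation mu_a := (trunc_lin mu a).

Lemma Q_neq0 : Q != 0.
Proof. by case: hQ => /monic_neq0. Qed.

(* Q has a root, hence is not constant. *)
Lemma Q_size_gt1 : (1 < size Q)%N.
Proof.
rewrite ltnNge; apply/negP => size_le1; case: ha => root_a _.
move: root_a; rewrite (size1_polyC size_le1) map_polyC /= /root hornerC.
case: hQ => /monicP; rewrite lead_coefE.
have -> : (size Q).-1 = 0%N by move: size_le1; case: (size Q) => [|[|]].
by move=> ->; rewrite rmorph1 oner_eq0.
Qed.

Lemma delta_Some : exists d, delta = Some d.
Proof. by case E: delta => [d|]; [exists d | case: (delta_neq_None mu_val (a:=a))]. Qed.

(* For a root c of Q, mu(x - c) <= mu(x - a) forces mu(x - c) <= mu(a - c):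
   the linear factors of Q are computed exactly by mu_{x-a}. *)
Lemma mu_le_trunc_lin_root c : root (map_poly iota Q) c ->
  vle (mu ('X - c%:P)) (mu_a ('X - c%:P)).
Proof.
move=> root_c; have opt := ha.2 c root_c.
rewrite (trunc_lin_XsubC mu_val) vle_min opt andbT; apply/negP => /negP lt_ac.
have shift : 'X - c%:P = (a - c)%:P + ('X - a%:P).
  by rewrite polyCB [RHS]addrC -[RHS]addrA addKr.
have lt_ac' : ~~ vle (mu ('X - a%:P)) (mu (a - c)%:P).
  by apply: contra lt_ac => le_ac; exact: vle_trans opt le_ac.
by move: lt_ac; rewrite shift (vD_lt mu_val lt_ac') vle_refl.
Qed.

(* Splitting Q over L: mu(Q) <= mu_{x-a}(Q). *)
Lemma mu_Q_le_trunc_lin : vle (mu (map_poly iota Q)) (mu_a (map_poly iota Q)).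
Proof.
have [r splitQ] := closed_field_poly_normal (map_poly iota Q).
have lc1 : lead_coef (map_poly iota Q) = 1.
  by apply/monicP; rewrite map_monic; case: hQ.
rewrite lc1 scale1r in splitQ; rewrite splitQ.
have roots z : z \in r -> vle (mu ('X - z%:P)) (mu_a ('X - z%:P)).
  by move=> zr; apply: mu_le_trunc_lin_root; rewrite splitQ root_prod_XsubC.
elim: r roots {splitQ} => [|z r IH] roots.
  by rewrite !big_nil (trunc_lin1 mu_val) (v1 mu_val) vle_refl.
rewrite !big_cons; apply: (mu_le_trunc_linM mu_val).
  by apply: roots; rewrite inE eqxx.
by apply: IH => y yr; apply: roots; rewrite inE yr orbT.
Qed.

Lemma nu_Q_le_nderivn b : vle (nu Q) (vadd (nu (Q^`N(b))) (vmuln b delta)).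
Proof.
rewrite -!mu_ext -nderivn_map; set F := map_poly iota Q.
apply: vle_trans mu_Q_le_trunc_lin _.
apply: (@vle_trans _ (vadd (mu_a (F^`N(b))) (vmuln b delta))); last first.
  by apply: vle_add; [exact: trunc_lin_le_mu | exact: vle_refl].
rewrite (trunc_linE mu a F^`N(b)).
case: (bmin_attained (size F^`N(b)) (tl_term mu a F^`N(b))) => [->|[k _ ->]].
  by rewrite vle_None.
apply: vle_trans (trunc_lin_le_term mu_val a F (k + b)) _.
rewrite /tl_term nderivn_comp hornerMn polyCMn vmulnD vaddA.
by apply: vle_add (vle_refl _); apply: vle_add (vle_refl _); exact: (vMn mu_val).
Qed.

Lemma eps_Q_le d : delta = Some d -> fle (eps nu Q) (Some (d, 1%N)).
Proof.
move=> hd; rewrite /eps leqNgt Q_size_gt1 /=.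
apply: fbig_le => b _; rewrite /eps_term.
have [q hq] := vSome nu_val Q_neq0; rewrite hq.
case E: (nu Q^`N(b)) => [y|] //=.
have := nu_Q_le_nderivn b; rewrite hq E hd /= mulr1n => le_q.
by rewrite -(oz_leD2 _ _ y) subrK addrC.
Qed.

(* Polynomials of degree < deg Q have epsilon < epsilon(Q) <= delta, i.e.
   nu(h) < nu(d_j h) + j delta for j >= 1. *)
Lemma nu_lt_nderivn_small (h : {poly K}) j : (size h < size Q)%N -> h != 0 ->
  (0 < j)%N -> ~~ vle (vadd (nu (h^`N(j))) (vmuln j delta)) (nu h).
Proof.
move=> small nz j_gt0; apply/negP => le_h.
have [d hd] := delta_Some; have [x hx] := vSome nu_val nz.
case E: (nu (h^`N(j))) => [y|]; last by rewrite E hx in le_h.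
have lt_j : (j < size h)%N.
  rewrite ltnNge; apply/negP => /nderivn_poly0 h0.
  by move: E; rewrite h0 (v0 nu_val).
rewrite E hd hx /= in le_h.
have size_h : (1 < size h)%N by apply: leq_ltn_trans lt_j.
have eps_le : fle (eps nu Q) (eps nu h).
  apply: (@fle_trans _ (Some (d, 1%N))) => //; first exact: eps_Q_le.
  rewrite /eps leqNgt size_h; apply: (@fbig_ge _ _ _ _ j).
  - move=> b; rewrite mem_index_iota => /andP[b_gt0 _]; rewrite /eps_term.
    by case: (nu h); case: (nu h^`N(b)).
  - by rewrite mem_index_iota j_gt0 lt_j.
  by rewrite /eps_term hx E /= mulr1n -(oz_leD2 _ _ y) subrK addrC.
have := hQ.2 h eps_le.
move: small size_h; case: (size Q) => // m; case: (size h) => // k /=.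
by rewrite ltnS => lt_km _ /(leq_ltn_trans)/(_ lt_km); rewrite ltnn.
Qed.

(* For deg h < deg Q, the value of h(a) is nu(h): the Taylor expansion
   h(a) = h + sum_(j>=1) d_j h (a - x)^j has a dominant first term. *)
Lemma mu_eval_small (h : {poly K}) : (size h < size Q)%N ->
  mu ((map_poly iota h).[a])%:P = nu h.
Proof.
move=> small; have [->|nz] := eqVneq h 0.
  by rewrite rmorph0 horner0 (v0 mu_val) (v0 nu_val).
set H := map_poly iota h.
have Hnz : H != 0 by rewrite map_poly_eq0.
have taylor : (H.[a])%:P =
    H + \sum_(i < (size H).-1) H^`N(i.+1) * (a%:P - 'X) ^+ i.+1.
  rewrite -horner_map /= {1}(_ : a%:P = 'X + (a%:P - 'X)); last first.
    by rewrite addrCA subrr addr0.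
  rewrite nderiv_taylor; last exact: mulrC.
  rewrite size_map_polyC (polySpred Hnz) big_ord_recl /=.
  rewrite nderivn_map horner_polyC_X nderivn0 expr0 mulr1; congr (_ + _).
  by apply: eq_bigr => i _; rewrite nderivn_map horner_polyC_X.
rewrite taylor (vsum_lt mu_val) // ?mu_ext // => i _.
have aX_nz : a%:P - 'X != 0 :> {poly L}.
  by rewrite -opprB oppr_eq0 polyXsubC_eq0.
rewrite (vM mu_val) (vX mu_val) // -opprB (vN mu_val) /H nderivn_map mu_ext.
exact: nu_lt_nderivn_small.
Qed.

Lemma nu_small_le_trunc_lin (h : {poly K}) : (size h < size Q)%N ->
  vle (nu h) (mu_a (map_poly iota h)).
Proof.
move=> small; have [->|nz] := eqVneq h 0.
  by rewrite rmorph0 trunc_lin0 vle_None.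
apply: trunc_lin_ge => -[|i]; rewrite /tl_term.
  rewrite nderivn0 mu_eval_small //; have [d ->] := delta_Some.
  by case: (nu h) => //= x; rewrite mulr0n addr0 lexx.
have small' : (size h^`N(i.+1) < size Q)%N.
  exact: leq_ltn_trans (size_nderivn_le _ _) small.
rewrite nderivn_map mu_eval_small //; apply: vleNgt.
exact: nu_lt_nderivn_small.
Qed.

Variable e : nat.
Hypothesis hemin :
  forall e' : nat, (0 < e' < e)%N -> ~ in_vg_Ka iota mu a (vmuln e' (nu Q)).

(* Differences of values of polynomials of degree < deg Q lie in the value
   group of K(a), since these values are those of elements of K(a). *)
Lemma in_vg_Ka_small (p q : {poly K}) (u w : G) :
  (size p < size Q)%N -> (size q < size Q)%N ->
  nu p = Some u -> nu q = Some w -> in_vg_Ka iota mu a (Some (u - w)).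
Proof.
move=> small_p small_q nu_p nu_q.
set cp := (map_poly iota p).[a]; set cq := (map_poly iota q).[a].
have mu_p : mu cp%:P = Some u by rewrite mu_eval_small.
have mu_q : mu cq%:P = Some w by rewrite mu_eval_small.
have cp_nz : cp != 0 by apply/eqP => cp0; move: mu_p; rewrite cp0 (v0 mu_val).
have cq_nz : cq != 0 by apply/eqP => cq0; move: mu_q; rewrite cq0 (v0 mu_val).
exists p, q; split => //.
have : mu cp%:P = vadd (mu (cp / cq)%:P) (mu cq%:P).
  by rewrite -(vM mu_val) -polyCM divfK.
rewrite mu_p mu_q; case: (mu (cp / cq)%:P) => // r [->].
by rewrite addrK.
Qed.

(* By minimality of e, the first e terms of a Q-expansion have pairwise
   distinct values: equal values would put (j - i) nu(Q) in the value group
   of K(a). *)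
Lemma qterm_values_distinct g i j : (i < j < e)%N ->
  nu (qterm Q g i) = nu (qterm Q g j) -> nu (qterm Q g i) = None.
Proof.
move=> /andP[lt_ij lt_je]; have [q nu_Q] := vSome nu_val Q_neq0.
rewrite /qterm !(vM nu_val) !(vX nu_val _ Q_neq0) nu_Q.
case nu_i: (nu (qexp Q g i)) => [ui|] //.
case nu_j: (nu (qexp Q g j)) => [uj|] //= [eq_ij].
have ji_gt0 : (0 < j - i < e)%N.
  by rewrite subn_gt0 lt_ij; apply: leq_ltn_trans (leq_subr _ _) lt_je.
have ui_eq : ui = uj + q *+ (j - i).
  apply: (addIr (q *+ i)); rewrite eq_ij -addrA -mulrnDr subnK //.
  exact: ltnW.
exfalso; apply: (hemin ji_gt0); rewrite nu_Q /= -[q *+ _](addKr uj) -ui_eq addrC.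
by apply: in_vg_Ka_small nu_i nu_j; exact: (size_qexp_lt Q_size_gt1).
Qed.

Section Polynomial.
Variable g : {poly K}.
Hypothesis size_g : (size g <= (size Q).-1 * e)%N.

Lemma mu_small : mu (map_poly iota g) = bmin e (fun i => nu (qterm Q g i)).
Proof.
rewrite {1}(qexp_sum_small Q_size_gt1 size_g) rmorph_sum /=.
rewrite (vsum_distinct mu_val (t := fun i => map_poly iota (qterm Q g i))).
  by apply: eq_bmin => i _; rewrite mu_ext.
by move=> i j lt_ije; rewrite !mu_ext; apply: qterm_values_distinct.
Qed.

(* mu_{x-a}(g) >= min_i mu_{x-a}(g_i Q^i) >= min_i nu(g_i Q^i) = mu(g). *)
Lemma trunc_lin_small : trunc_lin mu a (map_poly iota g) = mu (map_poly iota g).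
Proof.
apply: vle_anti; first exact: trunc_lin_le_mu.
rewrite mu_small [in trunc_lin _ _ _](qexp_sum_small Q_size_gt1 size_g).
rewrite rmorph_sum /=; apply: (trunc_lin_sum_ge mu_val) => i _.
apply: vle_trans (bmin_le _ (ltn_ord i)) _.
rewrite /qterm -mu_ext rmorphM rmorphXn /=; apply: (mu_le_trunc_linM mu_val).
  by rewrite mu_ext; apply: nu_small_le_trunc_lin; exact: (size_qexp_lt Q_size_gt1).
exact: (mu_le_trunc_linX mu_val) mu_Q_le_trunc_lin.
Qed.
End Polynomial.
End KeyPolynomial.

Theorem lemma3p9 (G : orderedZmodType)
  (K : fieldType) (L : closedFieldType) (iota : {rmorphism K -> L})
  (L_alg : forall z : L, exists2 p : {poly K}, p != 0 & root (map_poly iota p) z)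
  (nu : {poly K} -> option G) (mu : {poly L} -> option G)
  (nu_val : is_valuation nu) (mu_val : is_valuation mu)
  (mu_ext : forall f : {poly K}, mu (map_poly iota f) = nu f)
  (Q : {poly K}) (n : nat) (a : L) (e : nat)
  (hQ : key_poly nu Q) (hn : (size Q).-1 = n)
  (ha : optimizing_root iota mu Q a)
  (hQv : in_vg_Kbar mu (nu Q))
  (he : (0 < e)%N) (heQ : in_vg_Ka iota mu a (vmuln e (nu Q)))
  (hemin : forall e' : nat, (0 < e' < e)%N -> ~ in_vg_Ka iota mu a (vmuln e' (nu Q))) :
  forall g : {poly K}, ((size g).-1 < n * e)%N ->
    trunc_lin mu a (map_poly iota g) = mu (map_poly iota g) /\
    mu (map_poly iota g) = trunc nu Q g.
Proof.
move=> g; rewrite -hn => deg_g.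
have size_g : (size g <= (size Q).-1 * e)%N by move: deg_g; case: (size g).
split; first exact: (trunc_lin_small nu_val mu_val mu_ext hQ ha hemin size_g).
rewrite (mu_small nu_val mu_val mu_ext hQ ha hemin size_g).
by rewrite (trunc_expansion (Q_size_gt1 hQ ha) nu_val size_g).
Qed.
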